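(* Let $G$ be a group acting on a set $X$, and let $\alpha\in\,]0,1]$. (1) Let $A\subset G$ and $Y\subset X$ be finite nonempty subsets such that $|A\cdot Y|\leq(2-\alpha)|Y|$. Then $A^{-1}A\subset\mathrm{Sym}_{\alpha}(Y)$. (2) Let $(\rho,V)$ be a linear representation of $G$ on a finite-dimensional vector space $V$ over a field $k$, let $A\subset G$ and let $W$ be a finite-dimensional $k$-subspace of $V$ such that $\dim\langle A\cdot W\rangle\leq(2-\alpha)\dim W$. Then $A^{-1}A\subset\mathrm{Sym}_{\alpha}(W)$.
   Context: $g\cdot x$ denotes the action of $g\in G$ on $x\in X$ (resp. on $v\in V$). For $A\subset G$, $Y\subset X$: $A\cdot Y=\{a\cdot y\mid a\in A,\ y\in Y\}$. For a subspace $W$: $A\cdot W$ denotes the set $\{a\cdot w\mid a\in A, w\in W\}$ and $\langle A\cdot W\rangle$ its $k$-linear span; $A^{-1}A=\{a^{-1}b\mid a,b\in A\}$. For a finite nonempty $Y\subset X$, $\mathrm{Sym}_{\alpha}(Y)=\{g\in G\mid |g\cdot Y\cap Y|\geq\alpha|Y|\}$. For a subspace $W$, $\mathrm{Sym}_{\alpha}(W)=\{g\in G\mid \dim(g\cdot W\cap W)\geq\alpha\dim W\}$. *)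

From HB Require Import structures.
From mathcomp Require Import all_boot all_order all_algebra.
From mathcomp Require Import finmap.
Set Implicit Arguments. Unset Strict Implicit. Unset Printing Implicit Defensive.
Import Order.TTheory GRing.Theory Num.Theory.

Local Open Scope group_scope.

Definition is_action (G : groupType) (X : Type) (act : G -> X -> X) : Prop :=
  (forall x, act 1 x = x) /\
  (forall g h x, act (g * h) x = act g (act h x)).

(** A linear representation rho of G on the finite-dimensional k-space V
    (a group homomorphism G -> GL(V); rho g is then automatically invertible). *)
Definition is_representation (G : groupType) (k : fieldType) (V : vectType k)
    (rho : G -> 'End(V)) : Prop :=
  rho 1 = \1%VF /\ (forall g h, rho (g * h) = (rho g \o rho h)%VF).

Local Close Scope group_scope.
Local Open Scope fset_scope.
Local Open Scope ring_scope.

Definition act_fset (G : groupType) (X : choiceType) (act : G -> X -> X)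
    (A : {fset G}) (Y : {fset X}) : {fset X} :=
  [fset act a y | a in A, y in Y].

Definition Sym_set (R : realFieldType) (G : groupType) (X : choiceType)
    (act : G -> X -> X) (alpha : R) (Y : {fset X}) (g : G) : Prop :=
  alpha * (#|` Y|)%:R <= (#|` (act g @` Y) `&` Y|)%:R.

Definition Sym_space (R : realFieldType) (G : groupType) (k : fieldType)
    (V : vectType k) (rho : G -> 'End(V)) (alpha : R) (W : {vspace V}) (g : G)
    : Prop :=
  alpha * (\dim W)%:R <= (\dim ((rho g @: W) :&: W)%VS)%:R.

Definition is_span_act (G : groupType) (k : fieldType) (V : vectType k)
    (rho : G -> 'End(V)) (A : G -> Prop) (W : {vspace V}) (U : {vspace V})
    : Prop :=
  (forall a, A a -> (rho a @: W <= U)%VS) /\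
  (forall U' : {vspace V}, (forall a, A a -> (rho a @: W <= U')%VS) ->
     (U <= U')%VS).

From HB Require Import structures.
From mathcomp Require Import all_boot all_order all_algebra.
From mathcomp Require Import finmap.
From mathcomp Require Import lra.
Set Implicit Arguments.
Unset Strict Implicit.
Unset Printing Implicit Defensive.
Import Order.TTheory GRing.Theory Num.Theory.
Local Open Scope fset_scope.
Local Open Scope ring_scope.

(* Translations preserve size, so a.Y and b.Y are two subsets of A.Y of size
   |Y|; by inclusion-exclusion they meet in at least 2|Y| - |A.Y| >= alpha |Y|
   points, and translating by a^-1 maps a.Y \cap b.Y onto (a^-1 b).Y \cap Y.
   The linear case is the same argument with dimensions, using
   dim (U + U') + dim (U \cap U') = dim U + dim U'. *)

Lemma intersection_lower_bound (R : realFieldType) (alpha : R) (n u c : nat) :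
  (u + c = n + n)%N -> u%:R <= (2 - alpha) * n%:R -> alpha * n%:R <= c%:R.
Proof.
move=> /(congr1 (fun m => m%:R : R)); rewrite !natrD mulrBl => uc u_le.
lra.
Qed.

Section GroupAction.
Variables (G : groupType) (X : choiceType) (act : G -> X -> X).
Hypothesis act_is_action : is_action act.

Lemma act1 (x : X) : act 1%g x = x.
Proof. by case: act_is_action. Qed.

Lemma actM (g h : G) (x : X) : act (g * h)%g x = act g (act h x).
Proof. by case: act_is_action. Qed.

Lemma act_inj (g : G) : injective (act g).
Proof. by move=> x y /(congr1 (act g^-1%g)); rewrite -!actM mulVg !act1. Qed.

Lemma card_act (g : G) (Y : {fset X}) : #|` act g @` Y| = #|` Y|.
Proof. by apply/eqP/card_in_imfsetP => x y _ _; apply: act_inj. Qed.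

Lemma act_imfsetM (g h : G) (Y : {fset X}) :
  act (g * h)%g @` Y = act g @` (act h @` Y).
Proof. by rewrite -imfset_comp; apply: eq_imfset => // x; apply: actM. Qed.

Lemma act_imfset1 (Y : {fset X}) : act 1%g @` Y = Y.
Proof. by rewrite -[RHS]imfset_id; apply: eq_imfset => // x; apply: act1. Qed.

Lemma card_actV_cap (a b : G) (Y : {fset X}) :
  #|` act (a^-1 * b)%g @` Y `&` Y| = #|` act a @` Y `&` act b @` Y|.
Proof.
rewrite -[RHS](card_act a^-1%g) imfsetI; last by move=> x y _ _; apply: act_inj.
by rewrite -!act_imfsetM mulVg act_imfset1 fsetIC.
Qed.

Lemma act_imfset_sub (A : {fset G}) (Y : {fset X}) (a : G) :
  a \in A -> act a @` Y `<=` act_fset act A Y.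
Proof.
by move=> aA; apply/fsubsetP => _ /imfsetP[y yY ->]; apply: in_imfset2.
Qed.

Lemma Sym_set_small_doubling (R : realFieldType) (alpha : R)
    (A : {fset G}) (Y : {fset X}) (a b : G) :
  (#|` act_fset act A Y|)%:R <= (2 - alpha) * (#|` Y|)%:R ->
  a \in A -> b \in A -> Sym_set act alpha Y (a^-1 * b)%g.
Proof.
move=> small aA bA; rewrite /Sym_set card_actV_cap.
have := cardfsUI (act a @` Y) (act b @` Y); rewrite !card_act.
move/intersection_lower_bound; apply; apply: le_trans small.
by rewrite ler_nat fsubset_leq_card // fsubUset !act_imfset_sub.
Qed.

End GroupAction.

Section Representation.
Variables (G : groupType) (k : fieldType) (V : vectType k) (rho : G -> 'End(V)).
Hypothesis rho_is_representation : is_representation rho.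

Lemma rep_imgM (g h : G) (W : {vspace V}) :
  (rho (g * h)%g @: W = rho g @: (rho h @: W))%VS.
Proof. by case: rho_is_representation => _ ->; rewrite limg_comp. Qed.

Lemma rep_img1 (W : {vspace V}) : (rho 1%g @: W = W)%VS.
Proof. by case: rho_is_representation => -> _; rewrite lim1g. Qed.

Lemma rep_lker0 (g : G) : lker (rho g) == 0%VS.
Proof.
apply/lker0P => x y /(congr1 (rho g^-1%g)).
have rhoVK z : rho g^-1%g (rho g z) = z.
  case: rho_is_representation => rho1 rhoM.
  by rewrite -comp_lfunE -rhoM mulVg rho1 id_lfunE.
by rewrite !rhoVK.
Qed.

Lemma dim_rep_img (g : G) (W : {vspace V}) : \dim (rho g @: W) = \dim W.
Proof. by apply: limg_dim_eq; rewrite (eqP (rep_lker0 g)) capv0. Qed.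

Lemma dim_repV_cap (a b : G) (W : {vspace V}) :
  \dim (rho (a^-1 * b)%g @: W :&: W)%VS = \dim (rho a @: W :&: rho b @: W)%VS.
Proof.
rewrite -[RHS](dim_rep_img a^-1%g) lker0_img_cap ?rep_lker0 //.
by rewrite -!rep_imgM mulVg rep_img1 capvC.
Qed.

Lemma Sym_space_small_doubling (R : realFieldType) (alpha : R)
    (A : G -> Prop) (W U : {vspace V}) (a b : G) :
  (forall g, A g -> (rho g @: W <= U)%VS) ->
  (\dim U)%:R <= (2 - alpha) * (\dim W)%:R ->
  A a -> A b -> Sym_space rho alpha W (a^-1 * b)%g.
Proof.
move=> AW_sub small Aa Ab; rewrite /Sym_space dim_repV_cap.
have := dimv_sum_cap (rho a @: W) (rho b @: W); rewrite !dim_rep_img.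
move/intersection_lower_bound; apply; apply: le_trans small.
by rewrite ler_nat dimvS // subv_add !AW_sub.
Qed.

End Representation.

Theorem mainTheorem1 (R : realFieldType) (G : groupType) (alpha : R)
  (halpha : 0 < alpha <= 1) :
  (forall (X : choiceType) (act : G -> X -> X), is_action act ->
     forall (A : {fset G}) (Y : {fset X}),
       A != fset0 -> Y != fset0 ->
       (#|` act_fset act A Y|)%:R <= (2 - alpha) * (#|` Y|)%:R ->
       forall a b, a \in A -> b \in A ->
         Sym_set act alpha Y (((a ^-1) * b)%g))
  /\
  (forall (k : fieldType) (V : vectType k) (rho : G -> 'End(V)),
     is_representation rho ->
     forall (A : G -> Prop) (W : {vspace V}),
       (exists U : {vspace V}, is_span_act rho A W U /\
          (\dim U)%:R <= (2 - alpha) * (\dim W)%:R) ->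
       forall a b, A a -> A b ->
         Sym_space rho alpha W (((a ^-1) * b)%g)).
Proof.
split.
  move=> X act act_is_action A Y _ _ small a b aA bA.
  exact: (Sym_set_small_doubling act_is_action small aA bA).
move=> k V rho rho_is_rep A W [U [[AW_sub _] small]] a b Aa Ab.
exact: (Sym_space_small_doubling rho_is_rep AW_sub small Aa Ab).
Qed.
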